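(* Let $\mathrm{GL}_3(\mathbb R)$ act by conjugation on $\mathfrak{sl}_3(\mathbb R)$ and let $\mathfrak s_{\mathbb R}:=\left\{A=\begin{pmatrix} a&1&0\\ b&a&c\\ d&0&-2a\end{pmatrix}: a,b,c,d\in\mathbb R\right\}$ (so $a=A_{11},b=A_{21},c=A_{23},d=A_{31}$). Then the $C^\infty(\mathfrak s_{\mathbb R})$-module of vector fields on $\mathfrak s_{\mathbb R}$ strongly tangential to this action is generated by the four vector fields $v_1=c\,\partial_c-d\,\partial_d$, $v_2=-a\,v_1$, $v_3=\tfrac d2\partial_a-3ad\,\partial_b+(9a^2-b)\partial_c$, $v_4=-\tfrac c2\partial_a+3ac\,\partial_b+(b-9a^2)\partial_d$.
   Context: Strongly tangential vector fields: let a Lie group $G$ with Lie algebra $\mathfrak g$ act on a manifold $X$ and let $S\subset X$ be a locally closed submanifold. For a smooth map $\varphi:S\to\mathfrak g$ define $\alpha_\varphi(s):=d_e(a_s)(\varphi(s))\in T_sX$, where $a_s:G\to X$, $g\mapsto gs$ (here $a_s(g)=gsg^{-1}$, so $\alpha_\varphi(s)=[\varphi(s),s]$). If $\alpha_\varphi(s)\in T_sS$ for all $s\in S$, the vector field $\alpha_\varphi$ on $S$ is called strongly tangential to the action of $G$. *)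

From Stdlib Require Import Reals.
Open Scope R_scope.

(* Points of s_R, identified with R^4 via the coordinates (a,b,c,d).
   The same type is used for tangent vectors (components along
   d/da, d/db, d/dc, d/dd). *)
Record P := mkP { pa : R; pb : R; pc : R; pd : R }.

Inductive idx := Ia | Ib | Ic | Id.

Definition coord (i : idx) (p : P) : R :=
  match i with Ia => pa p | Ib => pb p | Ic => pc p | Id => pd p end.

Definition upd (i : idx) (p : P) (t : R) : P :=
  match i with
  | Ia => mkP t (pb p) (pc p) (pd p)
  | Ib => mkP (pa p) t (pc p) (pd p)
  | Ic => mkP (pa p) (pb p) t (pd p)
  | Id => mkP (pa p) (pb p) (pc p) t
  end.

Definition cont4 (f : P -> R) : Prop :=
  forall p eps, 0 < eps -> exists delta, 0 < delta /\
    forall q, (forall i, Rabs (coord i q - coord i p) < delta) ->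
      Rabs (f q - f p) < eps.

Definition partial (i : idx) (f g : P -> R) : Prop :=
  forall p, derivable_pt_lim (fun t => f (upd i p t)) (coord i p) (g p).

Fixpoint Ck (k : nat) (f : P -> R) : Prop :=
  match k with
  | O => cont4 f
  | S k' => cont4 f /\ forall i, exists g, partial i f g /\ Ck k' g
  end.

Definition smooth (f : P -> R) : Prop := forall k, Ck k f.

(* 3x3 real matrices, entries indexed by 0,1,2 *)
Definition Mat3 := nat -> nat -> R.

Definition mmul (A B : Mat3) : Mat3 :=
  fun i j => A i 0%nat * B 0%nat j + A i 1%nat * B 1%nat j + A i 2%nat * B 2%nat j.

Definition mcomm (A B : Mat3) : Mat3 := fun i j => mmul A B i j - mmul B A i j.

Definition mat3eq (A B : Mat3) : Prop :=
  forall i j, (i < 3)%nat -> (j < 3)%nat -> A i j = B i j.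

Definition smat (p : P) : Mat3 := fun i j =>
  match i, j with
  | O, O => pa p | O, 1%nat => 1 | O, 2%nat => 0
  | 1%nat, O => pb p | 1%nat, 1%nat => pa p | 1%nat, 2%nat => pc p
  | 2%nat, O => pd p | 2%nat, 1%nat => 0 | 2%nat, 2%nat => -2 * pa p
  | _, _ => 0
  end.

Definition tmat (v : P) : Mat3 := fun i j =>
  match i, j with
  | O, O => pa v | 1%nat, 1%nat => pa v | 2%nat, 2%nat => -2 * pa v
  | 1%nat, O => pb v | 1%nat, 2%nat => pc v | 2%nat, O => pd v
  | _, _ => 0
  end.

(* X : s_R -> T s_R is strongly tangential to the conjugation action of
   GL_3(R): X = alpha_phi for a smooth phi : s_R -> gl_3(R), where
   alpha_phi(s) = [phi(s), s] (which must lie in T_s s_R). *)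
Definition strongly_tangential (X : P -> P) : Prop :=
  exists phi : P -> Mat3,
    (forall i j, (i < 3)%nat -> (j < 3)%nat -> smooth (fun p => phi p i j)) /\
    forall p, mat3eq (mcomm (phi p) (smat p)) (tmat (X p)).

Definition v1 (p : P) : P := mkP 0 0 (pc p) (- pd p).
Definition v2 (p : P) : P := mkP 0 0 (- pa p * pc p) (pa p * pd p).
Definition v3 (p : P) : P :=
  mkP (pd p / 2) (-3 * pa p * pd p) (9 * pa p ^ 2 - pb p) 0.
Definition v4 (p : P) : P :=
  mkP (- pc p / 2) (3 * pa p * pc p) 0 (pb p - 9 * pa p ^ 2).

Definition comb4 (f1 f2 f3 f4 : P -> R) (p : P) : P :=
  mkP (f1 p * pa (v1 p) + f2 p * pa (v2 p) + f3 p * pa (v3 p) + f4 p * pa (v4 p))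
      (f1 p * pb (v1 p) + f2 p * pb (v2 p) + f3 p * pb (v3 p) + f4 p * pb (v4 p))
      (f1 p * pc (v1 p) + f2 p * pc (v2 p) + f3 p * pc (v3 p) + f4 p * pc (v4 p))
      (f1 p * pd (v1 p) + f2 p * pd (v2 p) + f3 p * pd (v3 p) + f4 p * pd (v4 p)).

(* Everything reduces to linear algebra at one point s of s_R.  Writing out
   [Y, s] = tmat v entrywise shows that the tangent vector v is
   (Y11 - Y33) v1 + 3 Y12 v2 + Y13 v3 + Y32 v4, with coefficients smooth when Y
   is.  Conversely each v_k is [Y_k, s] for a matrix Y_k whose entries are
   polynomial in s, so a smooth combination of the v_k is strongly tangential. *)

From Stdlib Require Import Reals Lra Lia FunctionalExtensionality.
Open Scope R_scope.

Lemma cont4_const (r : R) : cont4 (fun _ => r).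
Proof.
  intros p eps Heps. exists 1; split; [lra|].
  intros q _. unfold Rminus. rewrite Rplus_opp_r, Rabs_R0. exact Heps.
Qed.

Lemma cont4_coord (j : idx) : cont4 (coord j).
Proof. intros p eps Heps. exists eps; split; [exact Heps|]. intros q Hq. apply Hq. Qed.

Lemma cont4_common_delta (f g : P -> R) (p : P) (eps : R) :
  cont4 f -> cont4 g -> 0 < eps ->
  exists delta, 0 < delta /\
    forall q, (forall i, Rabs (coord i q - coord i p) < delta) ->
      Rabs (f q - f p) < eps /\ Rabs (g q - g p) < eps.
Proof.
  intros Hf Hg Heps.
  destruct (Hf p eps Heps) as [d1 [Hd1 H1]], (Hg p eps Heps) as [d2 [Hd2 H2]].
  exists (Rmin d1 d2); split; [apply Rmin_pos; assumption|].
  intros q Hq; split.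
  - apply H1; intro i; eapply Rlt_le_trans; [apply Hq|apply Rmin_l].
  - apply H2; intro i; eapply Rlt_le_trans; [apply Hq|apply Rmin_r].
Qed.

Lemma cont4_plus (f g : P -> R) : cont4 f -> cont4 g -> cont4 (fun p => f p + g p).
Proof.
  intros Hf Hg p eps Heps.
  destruct (cont4_common_delta f g p (eps / 2) Hf Hg) as [delta [Hdelta Hclose]]; [lra|].
  exists delta; split; [exact Hdelta|].
  intros q Hq. destruct (Hclose q Hq) as [Cf Cg].
  replace (f q + g q - (f p + g p)) with ((f q - f p) + (g q - g p)) by ring.
  eapply Rle_lt_trans; [apply Rabs_triang|]. lra.
Qed.

Lemma cont4_mult (f g : P -> R) : cont4 f -> cont4 g -> cont4 (fun p => f p * g p).
Proof.
  intros Hf Hg p eps Heps.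
  set (A := Rabs (f p)). set (B := Rabs (g p)).
  assert (HA : 0 <= A) by apply Rabs_pos.
  assert (HB : 0 <= B) by apply Rabs_pos.
  set (e := Rmin 1 (eps / (1 + A + B))).
  assert (He_pos : 0 < e) by (apply Rmin_pos; [lra | apply Rdiv_lt_0_compat; lra]).
  assert (He_le1 : e <= 1) by apply Rmin_l.
  assert (He_small : e * (1 + A + B) <= eps).
  { apply (Rmult_le_reg_r (/ (1 + A + B))); [apply Rinv_0_lt_compat; lra|].
    replace (e * (1 + A + B) * / (1 + A + B)) with e by (field; lra).
    apply Rmin_r. }
  destruct (cont4_common_delta f g p e Hf Hg He_pos) as [delta [Hdelta Hclose]].
  exists delta; split; [exact Hdelta|].
  intros q Hq. destruct (Hclose q Hq) as [Cf Cg].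
  replace (f q * g q - f p * g p)
    with ((f q - f p) * (g q - g p) + (f q - f p) * g p + f p * (g q - g p)) by ring.
  assert (Hsum : Rabs (f q - f p) * Rabs (g q - g p) + Rabs (f q - f p) * B
                 + A * Rabs (g q - g p) < e * (1 + A + B)).
  { assert (Rabs (f q - f p) * Rabs (g q - g p) < e * e).
    { apply Rmult_le_0_lt_compat; try apply Rabs_pos; assumption. }
    assert (Rabs (f q - f p) * B <= e * B) by (apply Rmult_le_compat_r; lra).
    assert (A * Rabs (g q - g p) <= A * e) by (apply Rmult_le_compat_l; lra).
    assert (e * e <= e * 1) by (apply Rmult_le_compat_l; lra).
    lra. }
  eapply Rle_lt_trans; [apply Rabs_triang|].
  eapply Rle_lt_trans; [apply Rplus_le_compat_r, Rabs_triang|].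
  rewrite !Rabs_mult. fold A B. lra.
Qed.

Lemma upd_coord (i : idx) (p : P) : upd i p (coord i p) = p.
Proof. destruct i, p; reflexivity. Qed.

Lemma partial_const (i : idx) (r : R) : partial i (fun _ => r) (fun _ => 0).
Proof. intro p. apply derivable_pt_lim_const. Qed.

Definition idx_eq_dec (i j : idx) : {i = j} + {i <> j}.
Proof. decide equality. Defined.

Lemma partial_coord (i j : idx) :
  partial i (coord j) (fun _ => if idx_eq_dec i j then 1 else 0).
Proof.
  intro p. destruct (idx_eq_dec i j) as [<-|Hne].
  - destruct i, p; apply derivable_pt_lim_id.
  - destruct i, j; try congruence; destruct p; apply derivable_pt_lim_const.
Qed.

Lemma partial_plus (i : idx) (f g f' g' : P -> R) :
  partial i f f' -> partial i g g' ->
  partial i (fun p => f p + g p) (fun p => f' p + g' p).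
Proof.
  intros Hf Hg p.
  apply (derivable_pt_lim_plus (fun t => f (upd i p t)) (fun t => g (upd i p t))); auto.
Qed.

Lemma partial_mult (i : idx) (f g f' g' : P -> R) :
  partial i f f' -> partial i g g' ->
  partial i (fun p => f p * g p) (fun p => f' p * g p + f p * g' p).
Proof.
  intros Hf Hg p.
  pose proof (derivable_pt_lim_mult (fun t => f (upd i p t)) (fun t => g (upd i p t))
                _ _ _ (Hf p) (Hg p)) as H.
  unfold mult_fct in H. rewrite upd_coord in H. exact H.
Qed.

Lemma Ck_weaken (k : nat) (f : P -> R) : Ck (S k) f -> Ck k f.
Proof.
  revert f; induction k as [|k IH]; intros f [Hc Hd].
  - exact Hc.
  - split; [exact Hc|].
    intro i; destruct (Hd i) as [g [Hpart Hg]]. exists g; split; auto.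
Qed.

Lemma Ck_const (k : nat) (r : R) : Ck k (fun _ => r).
Proof.
  revert r; induction k as [|k IH]; intro r; simpl.
  - apply cont4_const.
  - split; [apply cont4_const|]. intro i. exists (fun _ => 0). split; [apply partial_const|].
    apply IH.
Qed.

Lemma Ck_coord (k : nat) (j : idx) : Ck k (coord j).
Proof.
  destruct k; simpl; [apply cont4_coord|]. split; [apply cont4_coord|].
  intro i. eexists; split; [apply partial_coord|].
  destruct (idx_eq_dec i j); apply Ck_const.
Qed.

Lemma Ck_plus (k : nat) (f g : P -> R) : Ck k f -> Ck k g -> Ck k (fun p => f p + g p).
Proof.
  revert f g; induction k as [|k IH]; intros f g Hf Hg.
  - apply cont4_plus; assumption.
  - destruct Hf as [Hfc Hfd], Hg as [Hgc Hgd]. split; [apply cont4_plus; assumption|].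
    intro i. destruct (Hfd i) as [f' [Hf1 Hf2]], (Hgd i) as [g' [Hg1 Hg2]].
    exists (fun p => f' p + g' p). split; [apply partial_plus|apply IH]; assumption.
Qed.

(* Leibniz rule: the derivative f' g + f g' is only C^k when f and g are C^(k+1),
   hence the weakening. *)
Lemma Ck_mult (k : nat) (f g : P -> R) : Ck k f -> Ck k g -> Ck k (fun p => f p * g p).
Proof.
  revert f g; induction k as [|k IH]; intros f g Hf Hg.
  - apply cont4_mult; assumption.
  - pose proof (Ck_weaken _ _ Hf) as Hf0. pose proof (Ck_weaken _ _ Hg) as Hg0.
    destruct Hf as [Hfc Hfd], Hg as [Hgc Hgd]. split; [apply cont4_mult; assumption|].
    intro i. destruct (Hfd i) as [f' [Hf1 Hf2]], (Hgd i) as [g' [Hg1 Hg2]].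
    exists (fun p => f' p * g p + f p * g' p). split; [apply partial_mult; assumption|].
    apply (Ck_plus k (fun p => f' p * g p) (fun p => f p * g' p)); apply IH; assumption.
Qed.

Lemma smooth_const (r : R) : smooth (fun _ => r).
Proof. intro k; apply Ck_const. Qed.

Lemma smooth_coord (j : idx) : smooth (coord j).
Proof. intro k; apply Ck_coord. Qed.

Lemma smooth_plus (f g : P -> R) : smooth f -> smooth g -> smooth (fun p => f p + g p).
Proof. intros Hf Hg k. apply Ck_plus; auto. Qed.

Lemma smooth_mult (f g : P -> R) : smooth f -> smooth g -> smooth (fun p => f p * g p).
Proof. intros Hf Hg k. apply Ck_mult; auto. Qed.

Lemma smooth_opp (f : P -> R) : smooth f -> smooth (fun p => - f p).
Proof.
  intro Hf.
  replace (fun p => - f p) with (fun p => (-1) * f p) by (extensionality p; ring).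
  apply smooth_mult; [apply smooth_const | exact Hf].
Qed.

Lemma smooth_minus (f g : P -> R) : smooth f -> smooth g -> smooth (fun p => f p - g p).
Proof. intros Hf Hg. apply smooth_plus; [|apply smooth_opp]; assumption. Qed.

Ltac smooth_tac := repeat first
  [ assumption | apply smooth_plus | apply smooth_minus | apply smooth_opp | apply smooth_mult
  | apply smooth_const | apply (smooth_coord Ia) | apply (smooth_coord Ib)
  | apply (smooth_coord Ic) | apply (smooth_coord Id) ].

Lemma tangent_commutator_comb (Y : Mat3) (p v : P) :
  mat3eq (mcomm Y (smat p)) (tmat v) ->
  v = comb4 (fun _ => Y 0%nat 0%nat - Y 2%nat 2%nat) (fun _ => 3 * Y 0%nat 1%nat)
            (fun _ => Y 0%nat 2%nat) (fun _ => Y 2%nat 1%nat) p.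
Proof.
  intro H.
  pose proof (H 0%nat 0%nat ltac:(lia) ltac:(lia)) as E00.
  pose proof (H 0%nat 1%nat ltac:(lia) ltac:(lia)) as E01.
  pose proof (H 0%nat 2%nat ltac:(lia) ltac:(lia)) as E02.
  pose proof (H 1%nat 0%nat ltac:(lia) ltac:(lia)) as E10.
  pose proof (H 1%nat 1%nat ltac:(lia) ltac:(lia)) as E11.
  pose proof (H 1%nat 2%nat ltac:(lia) ltac:(lia)) as E12.
  pose proof (H 2%nat 0%nat ltac:(lia) ltac:(lia)) as E20.
  pose proof (H 2%nat 1%nat ltac:(lia) ltac:(lia)) as E21.
  pose proof (H 2%nat 2%nat ltac:(lia) ltac:(lia)) as E22.
  clear H.
  unfold mcomm, mmul, smat, tmat in *.
  unfold comb4, v1, v2, v3, v4.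
  destruct v as [xa xb xc xd], p as [a b c d]; simpl in *.
  assert (H11 : Y 1%nat 1%nat = Y 0%nat 0%nat) by lra.
  assert (H12 : Y 1%nat 2%nat = c * Y 0%nat 1%nat - 3 * a * Y 0%nat 2%nat) by lra.
  assert (H20 : Y 2%nat 0%nat = d * Y 0%nat 1%nat - 3 * a * Y 2%nat 1%nat) by lra.
  assert (H10 : Y 1%nat 0%nat
                = b * Y 0%nat 1%nat + (c * Y 2%nat 1%nat + d * Y 0%nat 2%nat) / 2) by lra.
  rewrite H11, H12, H20, H10 in *.
  f_equal; lra.
Qed.

(* Sum of preimages under ad(s), with 1-based matrix units E_ij: v1 = [-E33, s], v3 = [E13 + d/2 E21 - 3a E23, s],
   v4 = [E32 + c/2 E21 - 3a E31, s] and 3 v2 = [E12 + b E21 + c E23 + d E31, s]. *)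
Definition lift_mat (x1 x2 x3 x4 : R) (p : P) : Mat3 := fun i j =>
  match i, j with
  | O, 1%nat => x2 / 3
  | O, 2%nat => x3
  | 1%nat, O => pb p * (x2 / 3) + pc p * x4 / 2 + pd p * x3 / 2
  | 1%nat, 2%nat => pc p * (x2 / 3) - 3 * pa p * x3
  | 2%nat, O => pd p * (x2 / 3) - 3 * pa p * x4
  | 2%nat, 1%nat => x4
  | 2%nat, 2%nat => - x1
  | _, _ => 0
  end.

Lemma commutator_lift_mat (x1 x2 x3 x4 : R) (p : P) :
  mat3eq (mcomm (lift_mat x1 x2 x3 x4 p) (smat p))
         (tmat (comb4 (fun _ => x1) (fun _ => x2) (fun _ => x3) (fun _ => x4) p)).
Proof.
  intros i j Hi Hj.
  destruct i as [|[|[|i]]]; try lia; destruct j as [|[|[|j]]]; try lia;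
    unfold mcomm, mmul, smat, tmat, lift_mat, comb4, v1, v2, v3, v4; simpl; field.
Qed.

Lemma smooth_lift_mat (f1 f2 f3 f4 : P -> R) :
  smooth f1 -> smooth f2 -> smooth f3 -> smooth f4 ->
  forall i j, smooth (fun p => lift_mat (f1 p) (f2 p) (f3 p) (f4 p) p i j).
Proof.
  intros H1 H2 H3 H4 i j.
  destruct i as [|[|[|i]]]; destruct j as [|[|[|j]]]; unfold lift_mat;
    unfold Rdiv; smooth_tac.
Qed.

Theorem lemma7p4 : forall X : P -> P,
  strongly_tangential X <->
  exists f1 f2 f3 f4 : P -> R,
    smooth f1 /\ smooth f2 /\ smooth f3 /\ smooth f4 /\
    forall p, X p = comb4 f1 f2 f3 f4 p.
Proof.
  intro X; split.
  - intros [phi [Hsmooth Hcomm]].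
    exists (fun p => phi p 0%nat 0%nat - phi p 2%nat 2%nat),
           (fun p => 3 * phi p 0%nat 1%nat), (fun p => phi p 0%nat 2%nat),
           (fun p => phi p 2%nat 1%nat).
    repeat split; try (smooth_tac; apply Hsmooth; lia).
    intro p. exact (tangent_commutator_comb (phi p) p (X p) (Hcomm p)).
  - intros [f1 [f2 [f3 [f4 [H1 [H2 [H3 [H4 HX]]]]]]]].
    exists (fun p => lift_mat (f1 p) (f2 p) (f3 p) (f4 p) p). split.
    + intros i j _ _. apply smooth_lift_mat; assumption.
    + intro p. rewrite HX. exact (commutator_lift_mat (f1 p) (f2 p) (f3 p) (f4 p) p).
Qed.
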